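(* Let $G$ be a graph and $k\in\mathbb{N}$. If $\mathcal{D}$ is a $k$-tight tree-partition of $G$ that has a $k$-splittable torso, then there is a $k$-tight tree-partition $\mathcal{D}'$ of $G$ with $\mathbf{w}(\mathcal{D}')<\mathbf{w}(\mathcal{D})$.
   Context: All graphs are finite, undirected, loopless, may have parallel edges; degrees count edges with multiplicity and $\Delta(H)$ is the maximum degree of $H$. A tree-partition of $G$ is a pair $(T,\mathcal{B})$ with $T$ a tree and $\mathcal{B}=\{B_t: t\in V(T)\}$ a family of pairwise disjoint, possibly empty, subsets of $V(G)$ whose union is $V(G)$. For $e\in E(T)$, with $T_1,T_2$ the components of $T-e$ and $V_i=\bigcup_{t\in V(T_i)}B_t$, $\mathbf{cross}(e)$ is the set of edges of $G$ between $V_1$ and $V_2$; the adhesion is $\max_{e\in E(T)}|\mathbf{cross}(e)|$. For $t\in V(T)$, with $T_1,\dots,T_q$ the components of $T-t$, the torso $Z_t$ is obtained from $G$ by identifying, for each $i$, all vertices of $\bigcup_{h\in V(T_i)}B_h$ into a single new vertex (a satellite), keeping parallel edges and deleting loops. The strength of the tree-partition is $\min_{t\in V(T)}\Delta(Z_t)$. A tree-partition is $k$-tight if its adhesion is at most $k$ and its strength is at least $k+1$. A torso $Z_t$ is $k$-splittable if it has a cut $(X,V(Z_t)\setminus X)$ with at most $k$ crossing edges such that both $X$ and $V(Z_t)\setminus X$ contain a vertex of degree at least $k+1$ in $Z_t$. For a tree-partition $\mathcal{D}$, $\mathbf{s}_{\mathcal{D}}(t)$ is the number of vertices of $B_t$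 of degree at least $k+1$ in $G$, and $\mathbf{w}(\mathcal{D})=\sum_{t\in V(T)}(\mathbf{s}_{\mathcal{D}}(t)-1)$. *)

From HB Require Import structures.
From mathcomp Require Import all_boot all_order all_algebra.
Set Implicit Arguments. Unset Strict Implicit. Unset Printing Implicit Defensive.
Import Order.TTheory GRing.Theory Num.Theory.

(* A finite loopless multigraph on vertex type V is given by an edge
   multiplicity function m : V -> V -> nat (m u v = number of parallel
   edges between u and v). *)
Definition multigraph (V : finType) (m : V -> V -> nat) : Prop :=
  (forall u v, m u v = m v u) /\ (forall u, m u u = 0%N).

Definition degG (V : finType) (m : V -> V -> nat) (v : V) : nat :=
  \sum_(u : V) m v u.

(* A (finite, nonempty) tree: a symmetric irreflexive relation that is
   connected and has exactly #|T| - 1 edges (2 * (#|T|-1) ordered pairs). *)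
Definition is_tree (T : finType) (tE : rel T) : Prop :=
  [/\ symmetric tE, irreflexive tE, (0 < #|T|)%N,
      (forall x y, connect tE x y) &
      #|[set p : T * T | tE p.1 p.2]| = (2 * (#|T| - 1))%N].

Definition tree_partition (V T : finType) (tE : rel T) (B : T -> {set V}) : Prop :=
  [/\ is_tree tE,
      (forall t t', t != t' -> [disjoint B t & B t']) &
      (forall v : V, exists t, v \in B t)].

Section TreePartition.
Variables (V T : finType) (m : V -> V -> nat) (k : nat)
          (tE : rel T) (B : T -> {set V}).

Definition tE_minus_edge (a b : T) : rel T :=
  fun x y => tE x y && ~~ (((x == a) && (y == b)) || ((x == b) && (y == a))).

Definition side (a b c : T) : {set V} :=
  [set v | [exists h, (v \in B h) && connect (tE_minus_edge a b) c h]].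

Definition cross (a b : T) : nat :=
  \sum_(u in side a b a) \sum_(v in side a b b) m u v.

Definition adhesion : nat := \max_(p : T * T | tE p.1 p.2) cross p.1 p.2.

Definition tE_del (t : T) : rel T := fun x y => [&& tE x y, x != t & y != t].

(* Torso Z_t: vertex set = B_t (inl w) plus one satellite per component of
   T - t; the component is represented by its unique neighbour s of t (inr s). *)
Definition torso_vert (t : T) (x : V + T) : bool :=
  match x with inl w => w \in B t | inr s => tE t s end.

Definition cls (t : T) (x : V + T) : {set V} :=
  match x with
  | inl w => if w \in B t then [set w] else set0
  | inr s => if tE t s then
               [set v | [exists h, (v \in B h) && connect (tE_del t) s h]]
             else set0
  end.

Definition tmult (t : T) (x y : V + T) : nat :=
  if x == y then 0%N else \sum_(u in cls t x) \sum_(v in cls t y) m u v.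

Definition tdeg (t : T) (x : V + T) : nat :=
  \sum_(y | torso_vert t y) tmult t x y.

Definition tDelta (t : T) : nat := \max_(x | torso_vert t x) tdeg t x.

(* strength >= k+1, i.e. min_t Delta(Z_t) >= k+1 (T is nonempty) *)
Definition k_tight : Prop :=
  (adhesion <= k)%N /\ (forall t, (k.+1 <= tDelta t)%N).

Definition k_splittable (t : T) : Prop :=
  exists X : {set V + T},
    [/\ (\sum_(x | torso_vert t x && (x \in X))
          \sum_(y | torso_vert t y && (y \notin X)) tmult t x y <= k)%N,
        (exists x, [/\ torso_vert t x, x \in X & (k < tdeg t x)%N]) &
        (exists y, [/\ torso_vert t y, y \notin X & (k < tdeg t y)%N])].

(* s_D(t) and w(D) (an integer, since s_D(t) - 1 may be -1) *)
Definition sD (t : T) : nat := #|[set v in B t | (k < degG m v)%N]|.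

Definition wD : int := (\sum_(t : T) ((sD t)%:Z - 1))%R.

End TreePartition.

(* We refine T by
   adding one new node n (the type option T, n = None) adjacent to t0: the new
   bag B_n consists of the vertices of B_t0 lying in X, t0 keeps the others,
   and every neighbour s of t0 whose satellite lies in X is re-attached to n.

   The key torso facts are that a bag vertex has the same
   degree in its torso as in G, while a satellite has degree at most the
   adhesion; hence a partition with adhesion <= k is k-tight exactly when every
   bag holds a vertex of G-degree > k.  For the refined partition we then
   check that it is a tree-partition, that the new edge {n, t0} crosses only
   the edges of the cut X while every other edge crosses at most as many edges
   as the old tree edge it comes from, that both halves of B_t0 keep a vertex
   of degree > k, and that s(n) + s(t0) = s_D(t0), so that w drops by one. *)

From mathcomp Require Import all_boot all_order all_algebra.
From mathcomp Require Import zify.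
Set Implicit Arguments. Unset Strict Implicit. Unset Printing Implicit Defensive.

Lemma connect_map (A A' : finType) (e : rel A) (e' : rel A') (f : A -> A') :
  (forall x y, e x y -> connect e' (f x) (f y)) ->
  forall x y, connect e x y -> connect e' (f x) (f y).
Proof.
move=> fe x y /connectP [p pp ->]; elim: p x pp => [|z p IH] x /=.
  by move=> _; apply: connect0.
by move=> /andP [exz pz]; exact: connect_trans (fe _ _ exz) (IH _ pz).
Qed.

Lemma connect_closed (A : finType) (e : rel A) (P : pred A) :
  (forall x y, e x y -> P x -> P y) -> forall x y, connect e x y -> P x -> P y.
Proof.
move=> eP x y /connectP [p pp ->].
by elim: p x pp => [|z p IH] x //= /andP [exz pz] Px; exact: IH pz (eP _ _ exz Px).
Qed.

Lemma leave_through_neighbour (A : finType) (e : rel A) (t h : A) :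
  connect e t h -> h != t -> exists2 s, e t s & connect (tE_del e t) s h.
Proof.
move=> /connectP [p pp lp] ht.
suff : forall x, path e x p -> last x p = h ->
  (exists2 s, e t s & connect (tE_del e t) s h) \/ (x != t /\ connect (tE_del e t) x h).
  by move=> /(_ t pp (esym lp)) [//|[]]; rewrite eqxx.
elim: p {pp lp} => [|z p IH] x /=.
  by move=> _ ->; right; split => //; apply: connect0.
move=> /andP [exz pz] lz; case: (IH z pz lz) => [//|[zt cz]]; first by left.
case: (eqVneq x t) => [xt|xt]; first by left; exists z => //; rewrite -xt.
right; split => //; apply: connect_trans cz; apply: connect1.
by rewrite /tE_del exz xt zt.
Qed.

(* In a connected relation with root r every other vertex has a neighbour of
   strictly smaller rank (its distance from r). *)
Lemma parent_function (A : finType) (e : rel A) (r : A) :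
  (forall x, connect e r x) ->
  exists par : A -> A, exists d : A -> nat,
    forall v, v != r -> e (par v) v /\ (d (par v) < d v)%N.
Proof.
move=> conn.
pose reach v n := [exists p : n.-tuple A, path e r p && (last r p == v)].
have reach_ex v : exists n, reach v n.
  case/connectP: (conn v) => p pp lp; exists (size p).
  by apply/existsP; exists (in_tuple p); rewrite /= pp -lp eqxx.
pose d v := ex_minn (reach_ex v).
have parent_ex v : v != r -> exists u, e u v && (d u < d v)%N.
  move=> vr; rewrite /d; case: ex_minnP => n /existsP [p /andP [pp /eqP lp]] _.
  case/lastP: (tval p) pp lp (size_tuple p) => [|q z] /=.
    by move=> _ rv; rewrite rv eqxx in vr.
  rewrite rcons_path last_rcons size_rcons => /andP [pq ez] zv sz.
  exists (last r q); rewrite -zv ez /=.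
  case: ex_minnP => n' _ min'; apply: leq_ltn_trans (min' (size q) _) _.
    by apply/existsP; exists (in_tuple q); rewrite /= pq eqxx.
  by rewrite sz.
exists (fun v => odflt r [pick u | e u v && (d u < d v)%N]), d => v vr.
case: pickP => [u /andP [] //|none].
by case: (parent_ex v vr) => u; rewrite none.
Qed.

(* A connected symmetric relation has at least 2(|A| - 1) ordered edges: the
   pairs (par v, v) and (v, par v), v <> r, are pairwise distinct edges. *)
Lemma connected_edge_count (A : finType) (e : rel A) :
  symmetric e -> (forall x y, connect e x y) ->
  (2 * (#|A| - 1) <= #|[set p : A * A | e p.1 p.2]|)%N.
Proof.
move=> sym conn.
case: (pickP (fun _ : A => true)) => [r _|A0]; last first.
  by rewrite (eq_card0 (fun x => A0 x)).
have [par [d parP]] := parent_function (conn r).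
pose down v := (par v, v); pose up v := (v, par v).
have inj_down : injective down by move=> x y [].
have inj_up : injective up by move=> x y [].
have sub : (down @: [set~ r] :|: up @: [set~ r]) \subset [set p : A * A | e p.1 p.2].
  apply/subsetP => p; rewrite !inE => /orP [] /imsetP [v]; rewrite !inE => vr ->;
    have [epv _] := parP v vr; by rewrite //= sym.
have dis : down @: [set~ r] :&: up @: [set~ r] = set0.
  apply/setP => p; rewrite !inE; apply/negP => /andP [/imsetP [v vr ->] /imsetP [u ur]].
  move: vr ur; rewrite !inE => vr ur [E1 E2].
  have [_ h1] := parP v vr; have [_ h2] := parP u ur.
  by move: h1 h2; rewrite E1 E2 => h1 /(ltn_trans h1); rewrite ltnn.
have := subset_leq_card sub; rewrite cardsU dis cards0 subn0 !card_imset //.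
rewrite cardsC1; lia.
Qed.

(* In a tree, two distinct neighbours of t lie in different components of T - t:
   otherwise deleting the edge {t, s1} would leave a connected graph with too
   few edges. *)
Lemma tree_neighbours_separated (A : finType) (e : rel A) t s1 s2 :
  is_tree e -> e t s1 -> e t s2 -> s1 != s2 -> ~~ connect (tE_del e t) s1 s2.
Proof.
case=> sym irr _ conn cnt ts1 ts2 s12; apply/negP => C.
pose e0 := tE_minus_edge e t s1.
have ts : t != s1 by apply/eqP => E; rewrite -E irr in ts1.
have sym0 : symmetric e0.
  move=> x y; rewrite /e0 /tE_minus_edge (sym x y).
  by case: (x == t); case: (x == s1); case: (y == t); case: (y == s1);
    rewrite /= ?andbF ?andbT ?orbF.
have C0 : connect e0 s2 s1.
  rewrite (sym_connect_sym sym0); apply: connect_sub C => x y /and3P [exy xt yt].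
  by apply: connect1; rewrite /e0 /tE_minus_edge exy (negbTE xt) (negbTE yt) /= andbF.
have t2 : e0 t s2 by rewrite /e0 /tE_minus_edge ts2 eqxx (negbTE ts) /= orbF eq_sym.
have conn0 : forall x y, connect e0 x y.
  move=> x y; apply: (connect_sub _ (conn x y)) => a b eab.
  case: (boolP (((a == t) && (b == s1)) || ((a == s1) && (b == t)))).
    case/orP => /andP [/eqP -> /eqP ->].
      exact: connect_trans (connect1 t2) C0.
    rewrite (sym_connect_sym sym0); exact: connect_trans (connect1 t2) C0.
  by move=> H; apply: connect1; rewrite /e0 /tE_minus_edge eab H.
have D : [set (t, s1); (s1, t)] \subset [set p : A * A | e p.1 p.2].
  apply/subsetP => p; rewrite !inE => /orP [] /eqP -> /=; [done | by rewrite (sym s1 t)].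
have E0 : [set p : A * A | e p.1 p.2] :\: [set (t, s1); (s1, t)]
          = [set p : A * A | e0 p.1 p.2].
  by apply/setP => [[x y]]; rewrite !inE /e0 /tE_minus_edge /= !xpair_eqE andbC.
have := connected_edge_count sym0 conn0.
have := cardsID [set (t, s1); (s1, t)] [set p : A * A | e p.1 p.2].
rewrite (setIidPr D) E0 cards2 xpair_eqE (negbTE ts) /= cnt => <-.
by rewrite leqNgt addSnnS leq_addl.
Qed.

Lemma sum_disjoint_family (I W : finType) (P : pred I) (C : I -> {set W})
    (U : {set W}) (f : W -> nat) :
  (forall i j v, P i -> P j -> v \in C i -> v \in C j -> i = j) ->
  (forall i, P i -> C i \subset U) ->
  (\sum_(i | P i) \sum_(v in C i) f v <= \sum_(v in U) f v)%N.
Proof.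
move=> disj sub.
rewrite (eq_bigr (fun i => \sum_v (if v \in C i then f v else 0))); last first.
  by move=> i _; rewrite big_mkcond.
rewrite exchange_big [X in (_ <= X)%N]big_mkcond /=; apply: leq_sum => v _.
case: (boolP [exists i, P i && (v \in C i)]) => [/existsP [i /andP [Pi vi]]|/existsPn nv].
- rewrite (bigD1 i) //= vi big1 ?addn0; first by rewrite (subsetP (sub i Pi) v vi).
  move=> j /andP [Pj ji]; case: ifP => // vj.
  by rewrite (disj j i v Pj Pi vj vi) eqxx in ji.
- by rewrite big1 // => i Pi; move: (nv i); rewrite Pi /= => /negbTE ->.
Qed.

Lemma sum_covering_family (I W : finType) (P : pred I) (C : I -> {set W})
    (U : {set W}) (f : W -> nat) :
  (forall v, v \in U -> exists2 i, P i & v \in C i) ->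
  (\sum_(v in U) f v <= \sum_(i | P i) \sum_(v in C i) f v)%N.
Proof.
move=> cov.
rewrite (eq_bigr (fun i => \sum_v (if v \in C i then f v else 0))); last first.
  by move=> i _; rewrite big_mkcond.
rewrite exchange_big [X in (X <= _)%N]big_mkcond /=; apply: leq_sum => v _.
case: ifP => // vU; case: (cov v vU) => i Pi vi.
by rewrite (bigD1 i) //= vi leq_addr.
Qed.

Lemma sum_subset (W : finType) (A B : {set W}) (f : W -> nat) :
  A \subset B -> (\sum_(v in A) f v <= \sum_(v in B) f v)%N.
Proof. by move=> AB; rewrite [X in (_ <= X)%N](big_setID A) /= (setIidPr AB) leq_addr. Qed.

Section Sides.
Variables (V T : finType) (m : V -> V -> nat) (tE : rel T) (B : T -> {set V}).

Lemma cross_mono a b (S1 S2 : {set V}) :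
  side tE B a b a \subset S1 -> side tE B a b b \subset S2 ->
  (cross m tE B a b <= \sum_(u in S1) \sum_(v in S2) m u v)%N.
Proof.
move=> h1 h2; rewrite /cross.
apply: (@leq_trans (\sum_(u in side tE B a b a) \sum_(v in S2) m u v)).
  by apply: leq_sum => u _; apply: sum_subset.
exact: sum_subset.
Qed.

Lemma side_swap a b c : side tE B a b c = side tE B b a c.
Proof.
have Ee : tE_minus_edge tE a b =2 tE_minus_edge tE b a.
  by move=> x y; rewrite /tE_minus_edge; congr (_ && ~~ _); apply: orbC.
by apply/setP => v; rewrite !inE; apply: eq_existsb => h; rewrite (eq_connect Ee).
Qed.

Lemma cross_swap a b :
  (forall u v, m u v = m v u) -> cross m tE B a b = cross m tE B b a.
Proof.
move=> msym; rewrite /cross exchange_big !(side_swap a b).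
by apply: eq_bigr => u _; apply: eq_bigr => v _; rewrite msym.
Qed.

Lemma side_map (T' : finType) (tE' : rel T') (B' : T' -> {set V}) (f : T' -> T) x' y' :
  (forall h v, v \in B' h -> v \in B (f h)) ->
  (forall u w, tE_minus_edge tE' x' y' u w ->
     connect (tE_minus_edge tE (f x') (f y')) (f u) (f w)) ->
  forall z', side tE' B' x' y' z' \subset side tE B (f x') (f y') (f z').
Proof.
move=> Bf Ef z'; apply/subsetP => v; rewrite !inE => /existsP [h /andP [vh ch]].
by apply/existsP; exists (f h); rewrite (Bf _ _ vh) (connect_map Ef ch).
Qed.

End Sides.

Section TorsoDegrees.
Variables (V T : finType) (m : V -> V -> nat) (k : nat) (tE : rel T) (B : T -> {set V}).
Hypothesis tp : tree_partition tE B.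

Lemma tp_tree : is_tree tE. Proof. by case: tp. Qed.
Lemma tp_sym : symmetric tE. Proof. by case: tp => -[]. Qed.
Lemma tp_irr : irreflexive tE. Proof. by case: tp => -[]. Qed.

Lemma neighbour_neq t s : tE t s -> s != t.
Proof. by move=> ts; apply/eqP => E; rewrite E tp_irr in ts. Qed.

Lemma bag_uniq h1 h2 v : v \in B h1 -> v \in B h2 -> h1 = h2.
Proof.
move=> v1 v2; case: (eqVneq h1 h2) => // ne; case: tp => _ disj _.
by have := disjointFr (disj _ _ ne) v1; rewrite v2.
Qed.

Lemma del_connect_neq t s h : connect (tE_del tE t) s h -> s != t -> h != t.
Proof. by apply: (connect_closed (P := fun x => x != t)) => x y /and3P []. Qed.

Lemma del_sym t : symmetric (tE_del tE t).
Proof.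
move=> x y; rewrite /tE_del (tp_sym x y).
by case: (x == t); case: (y == t); rewrite ?andbF.
Qed.

Lemma del_connect_minus t s x y :
  connect (tE_del tE t) x y -> connect (tE_minus_edge tE t s) x y.
Proof.
apply: connect_sub => a b /and3P [ab at' bt]; apply: connect1.
by rewrite /tE_minus_edge ab (negbTE at') (negbTE bt) /= andbF.
Qed.

Lemma cls_disjoint t x y v : v \in cls tE B t x -> v \in cls tE B t y -> x = y.
Proof.
case: x => [a|s1]; case: y => [b|s2] /=.
- case: ifP => _; last by rewrite !inE.
  case: ifP => _; last by rewrite !inE.
  by rewrite !inE => /eqP -> /eqP ->.
- case: ifP => aB; last by rewrite !inE.
  case: ifP => ts; last by rewrite !inE.
  rewrite !inE => /eqP -> /existsP [h /andP [vh ch]].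
  by have := del_connect_neq ch (neighbour_neq ts); rewrite -(bag_uniq aB vh) eqxx.
- case: ifP => ts; last by rewrite !inE.
  case: ifP => bB; last by rewrite !inE.
  rewrite !inE => /existsP [h /andP [vh ch]] /eqP E; rewrite E in vh.
  by have := del_connect_neq ch (neighbour_neq ts); rewrite -(bag_uniq bB vh) eqxx.
- case: ifP => ts1; last by rewrite !inE.
  case: ifP => ts2; last by rewrite !inE.
  rewrite !inE => /existsP [h1 /andP [vh1 ch1]] /existsP [h2 /andP [vh2 ch2]].
  rewrite (bag_uniq vh1 vh2) in ch1.
  case: (eqVneq s1 s2) => [->//|ne].
  have : connect (tE_del tE t) s1 s2.
    by apply: connect_trans ch1 _; rewrite (sym_connect_sym (@del_sym t)).
  by rewrite (negbTE (tree_neighbours_separated tp_tree ts1 ts2 ne)).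
Qed.

Lemma tdeg_bagE t w : w \in B t ->
  tdeg m tE B t (inl w)
  = \sum_(y | torso_vert tE B t y) \sum_(v in if inl w == y then set0 else cls tE B t y) m w v.
Proof.
move=> wB; apply: eq_bigr => y _; rewrite /tmult; case: eqP => _.
  by rewrite big_set0.
by rewrite /= wB big_set1.
Qed.

Lemma tdeg_bag_le t w : w \in B t -> (tdeg m tE B t (inl w) <= degG m w)%N.
Proof.
move=> wB; rewrite tdeg_bagE //.
apply: leq_trans (sum_disjoint_family (U := [set: V]) _ _ _) _.
- move=> i j v _ _; case: eqP => _; first by rewrite inE.
  by case: eqP => _; [rewrite inE | exact: cls_disjoint].
- by move=> i _; apply: subsetT.
- by rewrite /degG; apply: eq_leq; apply: eq_bigl => v; rewrite inE.
Qed.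

(* Every G-neighbour v <> w of a bag vertex w lies in the class of some other
   torso vertex: the bag vertex v itself or the satellite of v's component. *)
Lemma degG_le_tdeg_bag t w : multigraph m -> w \in B t ->
  (degG m w <= tdeg m tE B t (inl w))%N.
Proof.
move=> [_ loopless] wB; rewrite tdeg_bagE //.
have -> : degG m w = \sum_(v in [set v | v != w]) m w v.
  rewrite /degG (bigD1 w) //= loopless add0n.
  by apply: eq_bigl => v; rewrite inE.
apply: sum_covering_family => v; rewrite inE => vw.
case: tp => [[_ _ _ conn _] _ cov]; case: (cov v) => h vh.
case: (eqVneq h t) => [E|ht].
  exists (inl v); first by rewrite /= -E.
  rewrite /= -E vh; case: eqP => [[E']|_]; first by rewrite E' eqxx in vw.
  by rewrite inE.
case: (leave_through_neighbour (conn t h) ht) => s ts cs.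
by exists (inr s) => //=; rewrite ts inE; apply/existsP; exists h; rewrite vh cs.
Qed.

Lemma tdeg_bag t w : multigraph m -> w \in B t -> tdeg m tE B t (inl w) = degG m w.
Proof.
by move=> mg wB; apply/eqP; rewrite eqn_leq tdeg_bag_le // degG_le_tdeg_bag.
Qed.

Lemma tdeg_satellite t s : multigraph m -> tE t s ->
  (tdeg m tE B t (inr s) <= cross m tE B t s)%N.
Proof.
move=> [msym _] ts; rewrite /tdeg.
rewrite (eq_bigr (fun y => \sum_(u in cls tE B t (inr s))
     \sum_(v in (if inr s == y then set0 else cls tE B t y)) m u v)); last first.
  move=> y _; rewrite /tmult; case: eqP => _; last by [].
  by rewrite big1 // => u _; rewrite big_set0.
rewrite exchange_big /=.
apply: (@leq_trans (\sum_(u in cls tE B t (inr s)) \sum_(v in side tE B t s t) m u v)).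
  apply: leq_sum => u _; apply: sum_disjoint_family.
  - move=> i j v _ _; case: eqP => _; first by rewrite inE.
    by case: eqP => _; [rewrite inE | exact: cls_disjoint].
  - move=> y _; apply/subsetP => v; case: eqP => // ny; first by rewrite inE.
    case: y ny => [w|s'] /= ny.
      case: ifP => wB; last by rewrite !inE.
      by rewrite !inE => /eqP ->; apply/existsP; exists t; rewrite wB connect0.
    case: ifP => ts'; last by rewrite !inE.
    rewrite !inE => /existsP [h /andP [vh ch]]; apply/existsP; exists h.
    rewrite vh /=; apply: connect_trans (del_connect_minus s ch); apply: connect1.
    rewrite /tE_minus_edge ts' eqxx /= negb_or; apply/andP; split.
      by apply/eqP => E; apply: ny; rewrite E.
    by rewrite eq_sym (negbTE (neighbour_neq ts)).
apply: (@leq_trans (\sum_(u in side tE B t s s) \sum_(v in side tE B t s t) m u v)).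
  apply: sum_subset; apply/subsetP => u; rewrite /= ts !inE => /existsP [h /andP [uh ch]].
  by apply/existsP; exists h; rewrite uh (del_connect_minus s ch).
rewrite /cross exchange_big; apply: eq_leq.
by apply: eq_bigr => u _; apply: eq_bigr => v _; rewrite msym.
Qed.

Lemma cross_le_adhesion a b : tE a b -> (cross m tE B a b <= adhesion m tE B)%N.
Proof. by move=> ab; exact: (@leq_bigmax_cond _ _ _ (a, b)). Qed.

Lemma torso_high_vertex t x : multigraph m -> (adhesion m tE B <= k)%N ->
  torso_vert tE B t x -> (k < tdeg m tE B t x)%N ->
  exists w, [/\ x = inl w, w \in B t & (k < degG m w)%N].
Proof.
move=> mg adh; case: x => [w|s] /= tx hx; first by exists w; rewrite -(tdeg_bag mg tx).
have := leq_trans (leq_trans (tdeg_satellite mg tx) (cross_le_adhesion tx)) adh.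
by rewrite leqNgt hx.
Qed.

Lemma tight_bag_high t : multigraph m -> k_tight m k tE B ->
  exists2 w, w \in B t & (k < degG m w)%N.
Proof.
move=> mg [adh str].
case: (boolP [exists x, torso_vert tE B t x && (k < tdeg m tE B t x)%N]) =>
    [/existsP [x /andP [tx hx]]|/existsPn low].
  by case: (torso_high_vertex mg adh tx hx) => w [_ wB hw]; exists w.
have := str t; rewrite ltnNge => /negP []; apply/bigmax_leqP => y ty.
by have := low y; rewrite ty -leqNgt.
Qed.

Lemma tight_of_high_bags : multigraph m -> (adhesion m tE B <= k)%N ->
  (forall t, exists2 w, w \in B t & (k < degG m w)%N) -> k_tight m k tE B.
Proof.
move=> mg adh high; split => // t; have [w wB hw] := high t.
apply: leq_trans hw _; rewrite -(tdeg_bag mg wB).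
exact: (@leq_bigmax_cond _ _ _ (inl w)).
Qed.

End TorsoDegrees.

Section CutSides.
Variables (V T : finType) (m : V -> V -> nat) (tE : rel T) (B : T -> {set V}).
Variables (t : T) (X : {set V + T}).

Definition cut_side (b : bool) : {set V} :=
  [set v | [exists x, [&& torso_vert tE B t x, (x \in X) == b & v \in cls tE B t x]]].

Lemma cut_side_edges :
  (\sum_(u in cut_side true) \sum_(v in cut_side false) m u v <=
   \sum_(x | torso_vert tE B t x && (x \in X))
     \sum_(y | torso_vert tE B t y && (y \notin X)) tmult m tE B t x y)%N.
Proof.
apply: leq_trans (sum_covering_family (P := fun x => torso_vert tE B t x && (x \in X))
   (C := cls tE B t) (U := cut_side true) _ _) _.
  by move=> v; rewrite inE => /existsP [x /and3P [tx /eqP xX vx]]; exists x; rewrite ?tx ?xX.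
apply: leq_sum => x /andP [tx xX].
rewrite (eq_bigr (fun y => \sum_(u in cls tE B t x) \sum_(v in cls tE B t y) m u v));
  last first.
  move=> y /andP [_ yX]; rewrite /tmult; case: eqP => // Exy.
  by rewrite Exy (negbTE yX) in xX.
rewrite [X in (_ <= X)%N]exchange_big /=; apply: leq_sum => u _.
apply: sum_covering_family => v; rewrite inE => /existsP [y /and3P [ty /eqP yX vy]].
by exists y; rewrite ?ty ?yX.
Qed.

End CutSides.

Section SplitTorso.
Variables (V T : finType) (m : V -> V -> nat) (k : nat) (tE : rel T) (B : T -> {set V}).
Hypothesis tp : tree_partition tE B.
Variables (t0 : T) (X : {set V + T}).

Definition moved : {set T} := [set s | tE t0 s && (inr s \in X)].

Definition Xbag : {set V} := [set w in B t0 | inl w \in X].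

(* The refined tree on option T, the new node being None. *)
Definition splitE : rel (option T) := fun x y =>
  match x, y with
  | Some a, Some b =>
      [&& tE a b, ~~ ((a == t0) && (b \in moved)) & ~~ ((b == t0) && (a \in moved))]
  | None, Some b => (b == t0) || (b \in moved)
  | Some a, None => (a == t0) || (a \in moved)
  | None, None => false
  end.

Definition splitB (x : option T) : {set V} :=
  match x with None => Xbag | Some a => if a == t0 then B t0 :\: Xbag else B a end.

(* Contracting the new edge {None, t0} maps the refined tree onto T. *)
Definition contract (x : option T) : T := odflt t0 x.

Definition lift_edge (p : T * T) : option T * option T :=
  let: (a, b) := p in
  if (a == t0) && (b \in moved) then (None, Some b)
  else if (b == t0) && (a \in moved) then (Some a, None) else (Some a, Some b).

Lemma t0_notin_moved : t0 \notin moved.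
Proof. by rewrite inE (tp_irr tp). Qed.

Lemma moved_neq s : s \in moved -> s != t0.
Proof. by move=> sX; apply/eqP => E; rewrite E (negbTE t0_notin_moved) in sX. Qed.

Lemma moved_neighbour s : s \in moved -> tE t0 s.
Proof. by rewrite inE => /andP []. Qed.

Lemma splitE_sym : symmetric splitE.
Proof.
move=> [a|] [b|] //=; rewrite (tp_sym tp a b).
by case: (tE b a) => //=; rewrite andbC.
Qed.

Lemma splitE_irr : irreflexive splitE.
Proof. by move=> [a|] //=; rewrite (tp_irr tp). Qed.

(* An old edge ab is still present, or replaced by the path a, None, b. *)
Lemma old_edge_connect a b : tE a b -> connect splitE (Some a) (Some b).
Proof.
move=> ab; case: (boolP (splitE (Some a) (Some b))) => [H|]; first exact: connect1.
rewrite /= ab /= negb_and !negbK => /orP [] /andP [/eqP E bX];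
  by apply: (@connect_trans _ _ None); apply: connect1; rewrite /= ?E ?eqxx ?bX ?orbT.
Qed.

Lemma splitE_connected x y : connect splitE x y.
Proof.
have to_t0 z : connect splitE z (Some t0).
  case: z => [a|]; last by apply: connect1; rewrite /= eqxx.
  case: (tp_tree tp) => _ _ _ conn _.
  exact: (connect_map (f := Some) old_edge_connect (conn a t0)).
by apply: connect_trans (to_t0 x) _; rewrite (sym_connect_sym splitE_sym).
Qed.

Lemma lift_edge_inj : injective lift_edge.
Proof.
apply: (can_inj (g := fun p => (contract p.1, contract p.2))) => -[a b]; rewrite /lift_edge.
by case: ifP => [/andP [/eqP -> _]|_] //; case: ifP => [/andP [/eqP -> _]|_].
Qed.

Lemma lift_contract u w : splitE u w -> contract u != contract w ->
  lift_edge (contract u, contract w) = (u, w).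
Proof.
case: u => [a|]; case: w => [b|] //=.
- by move=> /and3P [_ /negbTE -> /negbTE ->].
- case/orP => [/eqP ->|aX]; first by rewrite eqxx.
  by move=> _; rewrite (negbTE t0_notin_moved) andbF eqxx aX.
- case/orP => [/eqP ->|bX]; first by rewrite eqxx.
  by move=> _; rewrite eqxx bX.
Qed.

Lemma contract_edge u w :
  splitE u w -> (contract u == contract w) || tE (contract u) (contract w).
Proof.
case: u => [a|]; case: w => [b|] //=.
- by case/and3P => ->; rewrite orbT.
- case/orP => [/eqP ->|/moved_neighbour]; first by rewrite eqxx.
  by rewrite (tp_sym tp) => ->; rewrite orbT.
- by case/orP => [/eqP ->|/moved_neighbour ->]; rewrite ?eqxx ?orbT.
Qed.

Lemma contract_new_edge u w : splitE u w -> contract u = contract w ->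
  (u, w) \in [set (None, Some t0); (Some t0, None)].
Proof.
case: u => [a|]; case: w => [b|] //=.
- by move=> /and3P [ab _ _] E; rewrite E (tp_irr tp) in ab.
- by move=> _ ->; rewrite !inE eqxx orbT.
- by move=> _ <-; rewrite !inE eqxx.
Qed.

(* The refined tree has one more node and one more edge than T. *)
Lemma splitE_edge_count :
  #|[set p : option T * option T | splitE p.1 p.2]| = (2 * (#|{: option T}| - 1))%N.
Proof.
pose E := [set p : T * T | tE p.1 p.2].
pose D := [set (None, Some t0); (Some t0, None)].
have eqE : [set p : option T * option T | splitE p.1 p.2] = lift_edge @: E :|: D.
  apply/setP => -[x y]; rewrite !inE; apply/idP/idP.
  - move=> xy; case: (eqVneq (contract x) (contract y)) => [/(contract_new_edge xy)|fn].
      by rewrite !inE => ->; rewrite orbT.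
    apply/orP; left; apply/imsetP; exists (contract x, contract y).
      by rewrite inE /=; case/orP: (contract_edge xy) => // fe; rewrite fe in fn.
    by rewrite lift_contract.
  - case/orP => [/imsetP [[a b] ab ->]|].
      move: ab; rewrite inE /= => ab; rewrite /lift_edge.
      case: ifP => [/andP [_ bX]|H1] /=; first by rewrite bX orbT.
      case: ifP => [/andP [_ aX]|H2] /=; first by rewrite aX orbT.
      by rewrite ab H1 H2.
    by case/orP => /eqP [-> ->] /=; rewrite eqxx.
have dis : lift_edge @: E :&: D = set0.
  apply/setP => -[x y]; rewrite !inE; apply/negP => /andP [/imsetP [[a b] _ ->]].
  rewrite /lift_edge; case: ifP => [/andP [_ bX]|_].
    by rewrite !xpair_eqE /= orbF => /eqP [Ee]; rewrite Ee (negbTE t0_notin_moved) in bX.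
  case: ifP => [/andP [_ aX]|_]; last by rewrite !xpair_eqE /= ?andbF.
  by rewrite !xpair_eqE /= andbT => /eqP [Ee]; rewrite Ee (negbTE t0_notin_moved) in aX.
rewrite eqE cardsU dis cards0 subn0 card_imset; last exact: lift_edge_inj.
rewrite cards2 card_option.
case: (tp_tree tp) => _ _ _ _ ->.
have : (0 < #|T|)%N by apply/card_gt0P; exists t0.
rewrite xpair_eqE /=; lia.
Qed.

Lemma split_tree : is_tree splitE.
Proof.
split; [exact: splitE_sym | exact: splitE_irr | by rewrite card_option |
        exact: splitE_connected | exact: splitE_edge_count].
Qed.

Lemma splitB_sub x v : v \in splitB x -> v \in B (contract x).
Proof.
case: x => [a|] /=; last by rewrite inE => /andP [].
by case: eqP => [->|_] //; rewrite inE => /andP [].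
Qed.

Lemma splitB_uniq x y v : v \in splitB x -> v \in splitB y -> x = y.
Proof.
move=> vx vy; have := bag_uniq tp (splitB_sub vx) (splitB_sub vy).
case: x vx => [a|]; case: y vy => [b|] //=.
- by move=> _ _ ->.
- by move=> vy vx Ee; move: vx; rewrite Ee eqxx inE vy.
- by move=> vy vx Ee; move: vy; rewrite -Ee eqxx inE vx.
Qed.

Lemma split_partition : tree_partition splitE splitB.
Proof.
split; first exact: split_tree.
- move=> x y xy; rewrite disjoint_subset; apply/subsetP => v vx; rewrite inE /=.
  by apply/negP => vy; rewrite (splitB_uniq vx vy) eqxx in xy.
- move=> v; case: tp => _ _ /(_ v) [t vt].
  case: (eqVneq t t0) => [Ee|ne].
    case: (boolP (v \in Xbag)) => vX; first by exists None.
    by exists (Some t0); rewrite /= eqxx inE vX -Ee.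
  by exists (Some t); rewrite /= (negbTE ne).
Qed.

Lemma contract_minus_edge x' y' : splitE x' y' -> contract x' != contract y' ->
  forall u w, tE_minus_edge splitE x' y' u w ->
    connect (tE_minus_edge tE (contract x') (contract y')) (contract u) (contract w).
Proof.
move=> exy fne u w /andP [uw nuw].
case: (eqVneq (contract u) (contract w)) => [->|fn]; first exact: connect0.
apply: connect1; rewrite /tE_minus_edge.
have -> : tE (contract u) (contract w).
  by case/orP: (contract_edge uw) => // fe; rewrite fe in fn.
apply/negP => /orP [] /andP [/eqP e1 /eqP e2]; apply: (negP nuw).
  have : (u, w) = (x', y') by rewrite -(lift_contract uw fn) -(lift_contract exy fne) e1 e2.
  by case=> -> ->; rewrite !eqxx.
have yx : splitE y' x' by rewrite splitE_sym.
have : (u, w) = (y', x').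
  by rewrite -(lift_contract uw fn) -(lift_contract yx _) ?e1 ?e2 // eq_sym.
by case=> -> ->; rewrite !eqxx orbT.
Qed.

(* Nodes on the side of the new node when the new edge is deleted: the new node
   and the components of T - t0 through moved neighbours. *)
Definition near_new (x : option T) : bool :=
  match x with
  | None => true
  | Some h => [exists s, (s \in moved) && connect (tE_del tE t0) s h]
  end.

(* Nodes on the side of t0: t0 and the components through the other neighbours. *)
Definition near_t0 (x : option T) : bool :=
  match x with
  | None => false
  | Some h =>
      (h == t0) || [exists s, [&& tE t0 s, s \notin moved & connect (tE_del tE t0) s h]]
  end.

Lemma del_edge h b : tE h b -> h != t0 -> b != t0 -> tE_del tE t0 h b.
Proof. by move=> hb h0 b0; rewrite /tE_del hb h0 b0. Qed.

Lemma near_new_closed x y :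
  tE_minus_edge splitE None (Some t0) x y -> near_new x -> near_new y.
Proof.
case: x => [h|]; case: y => [b|] //=.
- case/andP => /and3P [hb _ c3] _ /existsP [s /andP [sX ch]].
  have h0 := del_connect_neq ch (moved_neq sX).
  case: (eqVneq b t0) => [Ee|b0].
    rewrite Ee eqxx /= in c3; rewrite Ee in hb.
    have sh : s != h by apply/eqP => Es; rewrite -Es sX in c3.
    have t0h : tE t0 h by rewrite (tp_sym tp).
    have := tree_neighbours_separated (tp_tree tp) (moved_neighbour sX) t0h sh.
    by rewrite ch.
  apply/existsP; exists s; rewrite sX /=.
  exact: connect_trans ch (connect1 (del_edge hb h0 b0)).
- rewrite /tE_minus_edge /= => /andP [/orP [/eqP ->|bX]]; first by rewrite eqxx.
  by move=> _ _; apply/existsP; exists b; rewrite bX connect0.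
Qed.

Lemma near_t0_closed x y :
  tE_minus_edge splitE None (Some t0) x y -> near_t0 x -> near_t0 y.
Proof.
case: x => [h|]; case: y => [b|] //=.
- case/andP => /and3P [hb c2 _] _ /orP [/eqP Eh|/existsP [s /and3P [ts sX ch]]].
    rewrite Eh eqxx /= in c2; rewrite Eh in hb.
    by apply/orP; right; apply/existsP; exists b; rewrite hb c2 connect0.
  have h0 := del_connect_neq ch (neighbour_neq tp ts).
  case: (eqVneq b t0) => [//|b0] /=.
  apply/existsP; exists s; rewrite ts sX /=.
  exact: connect_trans ch (connect1 (del_edge hb h0 b0)).
- rewrite /tE_minus_edge /= => /andP [/orP [/eqP ->|hX]]; first by rewrite eqxx.
  move=> _ /orP [/eqP Eh|/existsP [s /and3P [ts sX ch]]].
    by rewrite Eh (negbTE t0_notin_moved) in hX.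
  have sh : s != h by apply/eqP => Es; rewrite Es hX in sX.
  by have := tree_neighbours_separated (tp_tree tp) ts (moved_neighbour hX) sh; rewrite ch.
Qed.

Lemma new_side_new :
  side splitE splitB None (Some t0) None \subset cut_side tE B t0 X true.
Proof.
apply/subsetP => v; rewrite !inE => /existsP [h' /andP [vh ch]].
have := connect_closed near_new_closed ch isT.
case: h' vh {ch} => [h|] /=; last first.
  rewrite inE => /andP [vB vX] _; apply/existsP; exists (inl v).
  by rewrite /= vB vX /= inE.
move=> vh /existsP [s /andP [sX cs]].
rewrite (negbTE (del_connect_neq cs (moved_neq sX))) in vh.
have sX' : inr s \in X by move: sX; rewrite inE => /andP [].
apply/existsP; exists (inr s); rewrite /= (moved_neighbour sX) sX' /=.
by rewrite inE; apply/existsP; exists h; rewrite vh cs.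
Qed.

Lemma new_side_t0 :
  side splitE splitB None (Some t0) (Some t0) \subset cut_side tE B t0 X false.
Proof.
apply/subsetP => v; rewrite !inE => /existsP [h' /andP [vh ch]].
have := connect_closed near_t0_closed ch; rewrite /= eqxx => /(_ isT).
case: h' vh {ch} => [h|] //= vh /orP [/eqP Eh|/existsP [s /and3P [ts sX cs]]].
  move: vh; rewrite Eh eqxx !inE => /andP [vX vB].
  apply/existsP; exists (inl v); rewrite /= vB /= inE eqxx andbT.
  by apply/eqP/negbTE; apply: contra vX => ->; rewrite vB.
rewrite (negbTE (del_connect_neq cs (neighbour_neq tp ts))) in vh.
apply/existsP; exists (inr s); rewrite /= ts /=.
have -> : (inr s \in X) = false by apply/negP => H; apply: (negP sX); rewrite inE ts H.
by rewrite /= inE; apply/existsP; exists h; rewrite vh cs.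
Qed.

Lemma new_edge_cross :
  (cross m splitE splitB None (Some t0) <=
   \sum_(x | torso_vert tE B t0 x && (x \in X))
     \sum_(y | torso_vert tE B t0 y && (y \notin X)) tmult m tE B t0 x y)%N.
Proof.
exact: leq_trans (cross_mono m new_side_new new_side_t0) (cut_side_edges m tE B t0 X).
Qed.

Lemma lifted_edge_cross x y : splitE x y -> contract x != contract y ->
  (cross m splitE splitB x y <= adhesion m tE B)%N.
Proof.
move=> exy fn; have Ef := contract_minus_edge exy fn.
apply: leq_trans (cross_mono m (side_map splitB_sub Ef x) (side_map splitB_sub Ef y)) _.
apply: cross_le_adhesion.
by case/orP: (contract_edge exy) => // fe; rewrite fe in fn.
Qed.

(* The weight drops by one: the vertices of degree > k of B_t0 are split between
   the new node and t0, and the sum gains one term. *)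
Lemma split_weight_lt : (wD m k splitB < wD m k B)%R.
Proof.
have sum_option (F : option T -> int) : (\sum_x F x = F None + \sum_t F (Some t))%R.
  rewrite (bigD1 None) //=; congr (_ + _)%R.
  rewrite (reindex_onto (fun t => Some t) (fun x => odflt t0 x)); last by case.
  by apply: eq_bigl => t; rewrite eqxx.
rewrite /wD sum_option (bigD1 t0) //= [X in (_ < X)%R](bigD1 t0) //=.
rewrite (eq_bigr (fun t => ((sD m k B t)%:Z - 1)%R)); last first.
  by move=> t ne; rewrite /sD /= (negbTE ne).
have <- : (sD m k splitB None + sD m k splitB (Some t0) = sD m k B t0)%N.
  rewrite /sD /= eqxx -(cardsID Xbag [set v in B t0 | (k < degG m v)%N]).
  congr (_ + _); apply: eq_card => v; rewrite !inE;
    by case: (v \in B t0); case: (inl v \in X); case: (k < degG m v).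
set rest := (\sum_(i | i != t0) _)%R; lia.
Qed.

Section Tightness.
Hypotheses (mg : multigraph m) (tight : k_tight m k tE B).
Hypothesis cut : (\sum_(x | torso_vert tE B t0 x && (x \in X))
   \sum_(y | torso_vert tE B t0 y && (y \notin X)) tmult m tE B t0 x y <= k)%N.
Hypothesis high_in : exists x, [/\ torso_vert tE B t0 x, x \in X & (k < tdeg m tE B t0 x)%N].
Hypothesis high_out :
  exists y, [/\ torso_vert tE B t0 y, y \notin X & (k < tdeg m tE B t0 y)%N].

(* The new edge crosses at most the cut value, the others at most the old adhesion. *)
Lemma split_adhesion : (adhesion m splitE splitB <= k)%N.
Proof.
apply/bigmax_leqP => -[u w] /= uw.
case: (eqVneq (contract u) (contract w)) => [/(contract_new_edge uw)|fn].
  have new_cross : (cross m splitE splitB None (Some t0) <= k)%N.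
    exact: leq_trans new_edge_cross cut.
  rewrite !inE => /orP [] /eqP [-> ->] //.
  by rewrite cross_swap //; case: mg.
by case: tight => adh _; exact: leq_trans (lifted_edge_cross uw fn) adh.
Qed.

(* The two sides of the cut each contain a high torso vertex, which must be a
   high bag vertex; so both halves of B_t0 keep a vertex of degree > k. *)
Lemma split_bags_high t : exists2 w, w \in splitB t & (k < degG m w)%N.
Proof.
have adh : (adhesion m tE B <= k)%N by case: tight.
case: t => [h|] /=.
  case: (eqVneq h t0) => _; last exact: tight_bag_high tp h mg tight.
  case: high_out => y [ty yX hy]; case: (torso_high_vertex tp mg adh ty hy) => w [Ey wB hw].
  exists w => //; rewrite !inE wB andbT; apply: contra yX => /andP [_].
  by rewrite Ey.
case: high_in => x [tx xX hx]; case: (torso_high_vertex tp mg adh tx hx) => w [Ex wB hw].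
by exists w => //; rewrite inE wB -Ex xX.
Qed.

Lemma split_tight : k_tight m k splitE splitB.
Proof. exact: tight_of_high_bags split_partition mg split_adhesion split_bags_high. Qed.

End Tightness.

End SplitTorso.

Theorem mainTheorem7 (V : finType) (m : V -> V -> nat) (k : nat)
    (T : finType) (tE : rel T) (B : T -> {set V}) :
  multigraph m ->
  tree_partition tE B ->
  k_tight m k tE B ->
  (exists t : T, k_splittable m k tE B t) ->
  exists (T' : finType) (tE' : rel T') (B' : T' -> {set V}),
    [/\ tree_partition tE' B', k_tight m k tE' B' &
        (wD m k B' < wD m k B)%R].
Proof.
move=> mg tp tight [t0 [X [cut high_in high_out]]].
exists (option T), (splitE tE t0 X), (splitB B t0 X); split.
- exact: split_partition.
- exact: split_tight cut high_in high_out.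
- exact: split_weight_lt.
Qed.
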